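(* Let $(G,c)$ be a W-state graph, let $X,X'$ be the vertex sets of the two connected components of $G_m=(V(G),E_m(G))$, and let $\{x,x'\}$ be a two-vertex cut of $G$ with $x\in X$ and $x'\in X'$. Let $C_1,\dots,C_t$ be the connected components of $G-\{x,x'\}$. Then each W-block $(H_i,c_i)$, $i\in\{1,\dots,t\}$, of $(G,c)$ with respect to $\{x,x'\}$ is a W-state graph.
   Context: Graphs may have parallel edges but no loops. A half-edge $2$-colouring $c$ of $G$ assigns to each pair $(e,w)$ with $w$ an endpoint of edge $e$ a colour in $\{0,1\}$ (0 = blue, 1 = red). An edge $e=uv$ is bichromatic if $c(e,u)\neq c(e,v)$ and monochromatic otherwise; $E_m(G)$ is the set of monochromatic edges; standing convention: monochromatic edges are blue at both ends. A graph is matching-covered if every edge lies in some perfect matching. A W-state graph is a half-edge $2$-coloured matching-covered graph $(G,c)$ in which every perfect matching contains exactly one bichromatic edge, and every vertex $v$ is incident with an edge $e$ with $c(e,v)=1$. For any W-state graph, $G_m$ has exactly two connected components. W-blocks: for each $i$, start from $H_i:=G[V(C_i)\cup\{x,x'\}]$ (induced subgraph, keeping all parallel edges) with colouring $c_i$ agreeing with $c$ on its edges, and modify as follows. (1) If $x$ is not incident in $H_i$ with an edge whose half at $x$ is red, add a new bichromatic edge between $x$ and $x'$ whose red half is at $x$; likewise, if $x'$ is not incident in $H_i$ with an edge whose half at $x'$ is red, add a new bichromatic edge between $x$ and $x'$ whose red half is at $x'$. (2) If after this $H_i$ still contains no bichromatic edge between $x$ and $x'$, add a new bichromatic edge between $x$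 and $x'$ (with the red half at either endpoint). The resulting $(H_i,c_i)$ are the W-blocks. *)

From HB Require Import structures.
From mathcomp Require Import all_boot.
Set Implicit Arguments. Unset Strict Implicit. Unset Printing Implicit Defensive.

(* Finite multigraph (parallel edges allowed) with a half-edge 2-colouring.
   Each edge e has two ends src e, tgt e; csrc e (resp. ctgt e) is the colour
   of the half of e at src e (resp. tgt e).  true = red (1), false = blue (0). *)
Record mgraph := MGraph {
  vtx : finType;
  edg : finType;
  src : edg -> vtx;
  tgt : edg -> vtx;
  csrc : edg -> bool;
  ctgt : edg -> bool }.

Section Basics.
Variable G : mgraph.

Definition loopless := forall e : edg G, src e != tgt e.

Definition incident (e : edg G) (v : vtx G) := (src e == v) || (tgt e == v).

Definition colour (e : edg G) (w : vtx G) := if src e == w then csrc e else ctgt e.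

Definition bichromatic (e : edg G) := csrc e != ctgt e.

Definition joins (e : edg G) (u v : vtx G) :=
  ((src e == u) && (tgt e == v)) || ((src e == v) && (tgt e == u)).

Definition perfect_matching (M : {set edg G}) :=
  forall v : vtx G, #|[set e in M | incident e v]| = 1.

Definition matching_covered :=
  forall e : edg G, exists M : {set edg G}, perfect_matching M /\ e \in M.

Definition mono_blue := forall e : edg G, ~~ bichromatic e -> ~~ csrc e /\ ~~ ctgt e.

Definition Wstate :=
  [/\ loopless, mono_blue, matching_covered,
      (forall M, perfect_matching M -> #|[set e in M | bichromatic e]| = 1)
    & (forall v : vtx G, exists e : edg G, incident e v /\ colour e v = true)].

(* adjacency in G_m = (V(G), E_m(G)) *)
Definition mrel : rel (vtx G) :=
  fun u v => [exists e : edg G, ~~ bichromatic e && joins e u v].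

Definition adj : rel (vtx G) := fun u v => [exists e : edg G, joins e u v].

Definition adj_minus (S : {set vtx G}) : rel (vtx G) :=
  fun u v => [&& u \notin S, v \notin S & adj u v].

Definition is_component (r : rel (vtx G)) (A : {set vtx G}) :=
  exists v, A = [set u | connect r v u].

Definition two_vertex_cut (x x' : vtx G) :=
  x != x' /\ exists u v : vtx G,
    [/\ u \notin [set x; x'], v \notin [set x; x'] &
        ~~ connect (adj_minus [set x; x']) u v].

Definition component_minus (x x' : vtx G) (C : {set vtx G}) :=
  exists2 v, v \notin [set x; x'] & C = [set u | connect (adj_minus [set x; x']) v u].

End Basics.
Arguments mrel : clear implicits.
Arguments adj : clear implicits.

Section WBlock.
Variables (G : mgraph) (x x' : vtx G) (C : {set vtx G}).
(* choice of the endpoint carrying the red half of the edge added in step (2):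
   redx2 = true : red half at x; redx2 = false : red half at x' *)
Variable redx2 : bool.

Definition bset : {set vtx G} := x |: (x' |: C).

Lemma bset_x : x \in bset.
Proof. by rewrite /bset setU11. Qed.
Lemma bset_x' : x' \in bset.
Proof. by rewrite /bset !inE eqxx orbT. Qed.

Definition bV : finType := {v : vtx G | v \in bset}.
(* edges of the induced subgraph G[V(C) ∪ {x,x'}] (all parallel edges kept) *)
Definition oldE : finType := {e : edg G | (src e \in bset) && (tgt e \in bset)}.

Definition bx : bV := exist _ x bset_x.
Definition bx' : bV := exist _ x' bset_x'.

Definition red_at_x := [exists e : oldE, incident (val e) x && (colour (val e) x)].
Definition red_at_x' := [exists e : oldE, incident (val e) x' && (colour (val e) x')].
Definition bich_xx' := [exists e : oldE, bichromatic (val e) && joins (val e) x x'].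

(* new edges: 0 = step (1) at x, 1 = step (1) at x', 2 = step (2) *)
Definition add_new (k : 'I_3) : bool :=
  match val k with
  | 0 => ~~ red_at_x
  | 1 => ~~ red_at_x'
  | _ => [&& red_at_x, red_at_x' & ~~ bich_xx']
  end.

Definition newE : finType := {k : 'I_3 | add_new k}.
Definition bE : finType := (oldE + newE)%type.

Definition bsrc (e : bE) : bV :=
  match e with
  | inl e => exist _ (src (val e)) (proj1 (andP (valP e)))
  | inr _ => bx
  end.
Definition btgt (e : bE) : bV :=
  match e with
  | inl e => exist _ (tgt (val e)) (proj2 (andP (valP e)))
  | inr _ => bx'
  end.
Definition bcsrc (e : bE) : bool :=
  match e with
  | inl e => csrc (val e)
  | inr k => match val (val k) with 0 => true | 1 => false | _ => redx2 end
  end.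
Definition bctgt (e : bE) : bool :=
  match e with
  | inl e => ctgt (val e)
  | inr k => match val (val k) with 0 => false | 1 => true | _ => ~~ redx2 end
  end.

Definition wblock : mgraph := MGraph bsrc btgt bcsrc bctgt.
End WBlock.

(* The monochromatic edges stay inside the components X and X' of G_m, so the edges of a
   perfect matching leaving X are bichromatic, hence at most one; counting incidences then
   shows that |X| is odd and that the bichromatic edges are exactly those between X and X'.
   The same parity argument, applied to the vertices matched into C by perfect matchings
   through red edges at x and at x', shows that |C| is even.  Consequently every perfect
   matching of G matches C either inside C or inside B = C + {x, x'}.  Choosing perfect
   matchings through red edges at x, inside C and outside B yields a perfect matching of
   G[C] together with one of G - C containing a bichromatic edge, and a monochromatic perfect
   matching of G - B.  Hence perfect matchings of G[C] are monochromatic and those of G[B]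
   have exactly one bichromatic edge.  A perfect matching of the W-block is a perfect
   matching of G[B], or one of G[C] plus an edge between x and x', so it too has exactly one
   bichromatic edge; the added edges supply the red halves and the coverage. *)

From HB Require Import structures.
From mathcomp Require Import all_boot.
Set Implicit Arguments. Unset Strict Implicit. Unset Printing Implicit Defensive.

Lemma card1_eq (T : finType) (A : {set T}) a b : #|A| = 1 -> a \in A -> b \in A -> a = b.
Proof. by move/eqP/cards1P=> [c ->]; rewrite !inE => /eqP-> /eqP->. Qed.

Lemma card_sep_sum (T : finType) (A : {set T}) (p : pred T) :
  #|[set i in A | p i]| = \sum_(i in A) (p i : nat).
Proof.
rewrite -sum1_card [RHS](eq_bigr (fun i => if p i then 1 else 0)); last by move=> i _; case: (p i).
by rewrite -big_mkcondr; apply: eq_bigl => i; rewrite !inE.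
Qed.

Lemma card_sep_set1 (T : finType) (a : T) (p : pred T) : #|[set i in [set a] | p i]| = p a.
Proof. by rewrite card_sep_sum big_set1. Qed.

Lemma card_sep_imset (aT rT : finType) (f : aT -> rT) (A : {set aT}) (p : pred rT) :
  injective f -> #|[set y in f @: A | p y]| = #|[set a in A | p (f a)]|.
Proof.
move=> inj_f; rewrite -(card_imset _ inj_f); congr #|pred_of_set _|.
apply/setP => y; rewrite !inE; apply/andP/imsetP => [[/imsetP[a aA ->] pa]|[a]].
  by exists a; rewrite // inE aA.
by rewrite inE => /andP[aA pa] ->; rewrite imset_f.
Qed.

Lemma sum_eq_mem (T : finType) (S : {set T}) (a : T) :
  \sum_(v in S) ((a == v) : nat) = (a \in S).
Proof.
case: (boolP (a \in S)) => aS.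
  by rewrite (bigD1 a) //= eqxx big1 // => v /andP[_]; rewrite eq_sym => /negbTE->.
by rewrite big1 // => v vS; case: eqP => // av; rewrite av vS in aS.
Qed.

Section Matchings.
Variable G : mgraph.
Implicit Types (M N : {set edg G}) (A S P : {set vtx G}) (e h : edg G) (v : vtx G).

Definition deg N v := #|[set e in N | incident e v]|.
Definition inside N S := forall e, e \in N -> (src e \in S) && (tgt e \in S).
Definition perfect_on N S := inside N S /\ {in S, forall v, deg N v = 1}.
Definition crosses P e := (src e \in P) (+) (tgt e \in P).
Definition respects M P := forall e, e \in M -> (src e \in P) = (tgt e \in P).
Definition restrict M P := [set e in M | src e \in P].
Definition matched_closure M A :=
  [set v | [exists e in M, incident e v && ((src e \in A) || (tgt e \in A))]].

Lemma incident_src e : incident e (src e).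
Proof. by rewrite /incident eqxx. Qed.

Lemma incident_tgt e : incident e (tgt e).
Proof. by rewrite /incident eqxx orbT. Qed.

Lemma deg1_exists N v : deg N v = 1 -> exists2 e, e \in N & incident e v.
Proof.
move=> degv; have /card_gt0P[e] : 0 < deg N v by rewrite degv.
by rewrite inE => /andP[]; exists e.
Qed.

Lemma deg1_uniq N v e1 e2 : deg N v = 1 -> e1 \in N -> e2 \in N ->
  incident e1 v -> incident e2 v -> e1 = e2.
Proof. by move=> /card1_eq uniq N1 N2 I1 I2; apply: uniq; rewrite inE ?N1 ?N2. Qed.

Lemma deg_set1 h v : deg [set h] v = incident h v.
Proof. exact: card_sep_set1. Qed.

Lemma deg_setU_out N1 N2 v : {in N2, forall e, ~~ incident e v} ->
  deg (N1 :|: N2) v = deg N1 v.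
Proof.
move=> out2; congr #|pred_of_set _|; apply/setP => e; rewrite !inE.
by case: (boolP (e \in N2)) => [/out2/negbTE->|_]; rewrite ?orbF ?andbF.
Qed.

Lemma inside_incident N S e v : inside N S -> e \in N -> incident e v -> v \in S.
Proof. by move=> inN /inN/andP[? ?] /orP[]/eqP<-. Qed.

Lemma perfect_matching_setU N1 N2 S :
  perfect_on N1 S -> perfect_on N2 (~: S) -> perfect_matching (N1 :|: N2).
Proof.
move=> [in1 deg1] [in2 deg2] v; rewrite -/(deg _ v).
case: (boolP (v \in S)) => vS.
  rewrite deg_setU_out ?deg1 // => e eN2; apply/negP => /(inside_incident in2 eN2).
  by rewrite inE vS.
rewrite setUC deg_setU_out ?deg2 ?inE // => e eN1; apply/negP.
by move=> /(inside_incident in1 eN1); apply/negP.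
Qed.

Lemma respectsC M P : respects M P -> respects M (~: P).
Proof. by move=> resp e eM; rewrite !inE resp. Qed.

Lemma respects_incident M P e v : respects M P -> e \in M -> incident e v ->
  (src e \in P) = (v \in P).
Proof. by move=> resp eM /orP[]/eqP<- //; apply: resp. Qed.

Lemma perfect_on_restrict M P : perfect_matching M -> respects M P ->
  perfect_on (restrict M P) P.
Proof.
move=> pmM resp; split=> [e /[!inE] /andP[eM eP] | v vP].
  by rewrite eP -resp.
rewrite -(pmM v); congr #|pred_of_set _|; apply/setP => e; rewrite !inE.
by case: (boolP (e \in M)) => //= eM; apply/andP/idP => [[]//|ev];
  rewrite (respects_incident resp eM ev).
Qed.

(* Double counting of the pairs (v, e) with v in S and e an edge of M at v. *)
Lemma odd_card_crossing M S : loopless G -> perfect_matching M ->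
  odd #|S| = odd #|[set e in M | crosses S e]|.
Proof.
move=> loopG pmM.
have ends_in e : \sum_(v in S) (incident e v : nat) = (src e \in S) + (tgt e \in S).
  rewrite -!sum_eq_mem -big_split /=; apply: eq_bigr => v _.
  rewrite /incident; case: (src e =P v) => [<-|_]; last by case: (tgt e == v).
  by rewrite eq_sym (negbTE (loopG e)).
have -> : #|S| = \sum_(v in S) \sum_(e in M) (incident e v : nat).
  by rewrite -sum1_card; apply: eq_bigr => v _; rewrite -card_sep_sum pmM.
rewrite exchange_big /= (eq_bigr _ (fun e _ => ends_in e)) card_sep_sum.
rewrite (eq_bigr (fun e => (crosses S e : nat) + 2 * ((src e \in S) && (tgt e \in S))));
  last by move=> e _; rewrite /crosses; case: (src e \in S); case: (tgt e \in S).
by rewrite big_split /= -big_distrr /= oddD oddM addbF.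
Qed.

Lemma even_card_respects M P : loopless G -> perfect_matching M -> respects M P ->
  ~~ odd #|P|.
Proof.
move=> loopG pmM resp; rewrite (odd_card_crossing _ loopG pmM).
rewrite (eq_card0 (_ : _ =i pred0)) // => e; rewrite !inE /crosses.
by case: (boolP (e \in M)) => //= eM; rewrite resp ?addbb.
Qed.

Lemma mem_matched_closure M A e v : perfect_matching M -> e \in M -> incident e v ->
  (v \in matched_closure M A) = (src e \in A) || (tgt e \in A).
Proof.
move=> pmM eM ev; rewrite inE; apply/existsP/idP => [[f /and3P[fM fv fA]]|eA].
  by rewrite -(deg1_uniq (pmM v) fM eM fv ev).
by exists e; rewrite eM ev.
Qed.

Lemma matched_closure_respects M A : perfect_matching M -> respects M (matched_closure M A).
Proof.
move=> pmM e eM.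
by rewrite (mem_matched_closure _ pmM eM (incident_src e))
  (mem_matched_closure _ pmM eM (incident_tgt e)).
Qed.

Lemma sub_matched_closure M A v : perfect_matching M -> v \in A -> v \in matched_closure M A.
Proof.
move=> pmM vA; have [e eM ev] := deg1_exists (pmM v).
by rewrite (mem_matched_closure _ pmM eM ev); case/orP: ev => /eqP->; rewrite vA ?orbT.
Qed.

End Matchings.

Section Components.
Variable G : mgraph.
Implicit Types (r : rel (vtx G)) (A : {set vtx G}) (e : edg G) (u v w : vtx G).

Lemma joins_sym e u v : joins e u v = joins e v u.
Proof. by rewrite /joins orbC. Qed.

Lemma mrel_sym : symmetric (mrel G).
Proof. by move=> u v; apply/existsP/existsP => -[e]; exists e; rewrite joins_sym. Qed.

Lemma adj_minus_sym (S : {set vtx G}) : symmetric (adj_minus S).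
Proof.
move=> u v; rewrite /adj_minus andbCA; congr [&& _, _ & _].
by apply/existsP/existsP => -[e]; exists e; rewrite joins_sym.
Qed.

Lemma incident_joins e u u' v : joins e u u' -> incident e v = (v \in [set u; u']).
Proof.
by rewrite /incident !inE => /orP[]/andP[/eqP-> /eqP->]; rewrite ?[_ == v]eq_sym // orbC.
Qed.

Lemma joins_of_ends e u u' : src e \in [set u; u'] -> tgt e \in [set u; u'] ->
  src e != tgt e -> joins e u u'.
Proof. by rewrite /joins !inE => /orP[]/eqP-> /orP[]/eqP->; rewrite ?eqxx ?orbT. Qed.

Lemma adj_src_tgt e : adj G (src e) (tgt e).
Proof. by apply/existsP; exists e; rewrite /joins !eqxx. Qed.

Lemma adj_tgt_src e : adj G (tgt e) (src e).
Proof. by apply/existsP; exists e; rewrite /joins !eqxx orbT. Qed.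

Lemma is_component_closed r A u v : symmetric r -> is_component r A -> r u v ->
  (u \in A) = (v \in A).
Proof.
move=> sym_r [a ->] ruv; rewrite !inE; apply/idP/idP => au.
  exact: connect_trans au (connect1 ruv).
by apply: connect_trans au (connect1 _); rewrite sym_r.
Qed.

Lemma is_component_disjoint r A A' v : symmetric r ->
  is_component r A -> is_component r A' -> A != A' -> v \in A' -> v \notin A.
Proof.
move=> sym_r [a ->] [a' ->] neqA; rewrite !inE => a'v; apply/negP => av.
have sc := sym_connect_sym sym_r.
have /(same_connect sc) same : connect r a a' by apply: connect_trans av _; rewrite sc.
by move/eqP: neqA; apply; apply/setP => u; rewrite !inE same.
Qed.

Section ComponentMinus.
Variables (x x' : vtx G) (C : {set vtx G}).
Hypothesis compC : component_minus x x' C.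

Lemma component_minus_notin u : u \in C -> u \notin [set x; x'].
Proof.
case: compC => a aS ->; rewrite inE => /connectP[p pth ->].
elim/last_ind: p pth => [//|p y _]; rewrite rcons_path last_rcons => /andP[_].
by case/and3P.
Qed.

Lemma component_minus_adj u w : u \in C -> adj G u w -> (w \in C) || (w \in [set x; x']).
Proof.
move=> uC uw; case: (boolP (w \in [set x; x'])) => wS; rewrite ?orbT // orbF.
have uS := component_minus_notin uC.
move: uC; case: compC => a _ ->; rewrite !inE => au.
by apply: connect_trans au (connect1 _); rewrite /adj_minus uS wS.
Qed.

Lemma component_minus_nonempty : exists u, u \in C.
Proof. by case: compC => a _ ->; exists a; rewrite inE connect0. Qed.

Lemma two_vertex_cut_outside : two_vertex_cut x x' ->
  exists2 d, d \notin C & d \notin [set x; x'].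
Proof.
case=> _ [u [v [uS vS uv]]].
case: (boolP (u \in C)) => uC; last by exists u.
case: (boolP (v \in C)) => vC; last by exists v.
move: uC vC uv; case: compC => a _ ->; rewrite !inE => au av.
have sc := sym_connect_sym (adj_minus_sym [set x; x']).
by rewrite (connect_trans _ av) // sc.
Qed.

End ComponentMinus.
End Components.

Section WState.
Variables (G : mgraph) (X : {set vtx G}) (x x' : vtx G).
Hypotheses (WG : Wstate G) (compX : is_component (mrel G) X).
Hypotheses (xX : x \in X) (x'X : x' \notin X).
Implicit Types (M N : {set edg G}) (P : {set vtx G}) (e g : edg G) (v : vtx G).

Let loopG : loopless G. Proof. by case: WG. Qed.
Let monoG : mono_blue G. Proof. by case: WG. Qed.
Let coverG : matching_covered G. Proof. by case: WG. Qed.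
Let oneG M : perfect_matching M -> #|[set e in M | bichromatic e]| = 1.
Proof. by case: WG => _ _ _ + _; apply. Qed.
Let redG v : exists e, incident e v /\ colour e v = true.
Proof. by case: WG => _ _ _ _; apply. Qed.

Lemma red_bichromatic e v : colour e v -> bichromatic e.
Proof. by apply: contraLR => /monoG[/negbTE s /negbTE t]; rewrite /colour s t; case: ifP. Qed.

Lemma bichromatic_uniq M e1 e2 : perfect_matching M -> e1 \in M -> e2 \in M ->
  bichromatic e1 -> bichromatic e2 -> e1 = e2.
Proof. by move=> /oneG /card1_eq uniq M1 M2 b1 b2; apply: uniq; rewrite inE ?M1 ?M2. Qed.

Lemma exists_bichromatic M : perfect_matching M -> exists2 e, e \in M & bichromatic e.
Proof.
move=> /oneG cardM; have /card_gt0P[e] : 0 < #|[set e in M | bichromatic e]| by rewrite cardM.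
by rewrite inE => /andP[]; exists e.
Qed.

Lemma crosses_bichromatic e : crosses X e -> bichromatic e.
Proof.
apply: contraLR => mono; rewrite /crosses negb_add.
apply/eqP/(is_component_closed (@mrel_sym G) compX).
by apply/existsP; exists e; rewrite mono /joins !eqxx.
Qed.

(* If |X| were even, no perfect matching, hence no edge at all, would cross X.  The X-part
   of a perfect matching through a red edge at x' and the other part of one through a red
   edge at x would then glue to a perfect matching whose bichromatic edge can be neither. *)
Lemma odd_card_component : odd #|X|.
Proof.
apply/negPn/negP => evenX.
have respX M : respects M X.
  move=> e _; apply/eqP; rewrite -negb_add; apply/negP => crX.
  have [M' [pmM' eM']] := coverG e.
  have : #|[set f in M' | crosses X f]| <= #|[set f in M' | bichromatic f]|.
    by apply/subset_leq_card/subsetP => f; rewrite !inE => /andP[-> /crosses_bichromatic].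
  have : 0 < #|[set f in M' | crosses X f]| by apply/card_gt0P; exists e; rewrite inE eM'.
  by move: (odd_card_crossing X loopG pmM'); rewrite (negbTE evenX) oneG //; case: #|_| => [|[|]].
have [g [xg redg]] := redG x; have [g' [x'g' redg']] := redG x'.
have [M [pmM gM]] := coverG g; have [M' [pmM' g'M']] := coverG g'.
have pmN : perfect_matching (restrict M' X :|: restrict M (~: X)).
  exact: perfect_matching_setU (perfect_on_restrict pmM' (respX M'))
                               (perfect_on_restrict pmM (respectsC (respX M))).
have [b] := exists_bichromatic pmN; rewrite !inE => /orP[]/andP[bM bX] bb.
  rewrite (bichromatic_uniq pmM' bM g'M' bb (red_bichromatic redg')) in bX.
  by rewrite (respects_incident (respX M') g'M' x'g') (negbTE x'X) in bX.
rewrite (bichromatic_uniq pmM bM gM bb (red_bichromatic redg)) in bX.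
by rewrite (respects_incident (respX M) gM xg) xX in bX.
Qed.

Lemma bichromatic_crosses e : bichromatic e = crosses X e.
Proof.
apply/idP/idP => [be|/crosses_bichromatic //].
have [M [pmM eM]] := coverG e.
have /card_gt0P[f] : 0 < #|[set f in M | crosses X f]|.
  by move: (odd_card_crossing X loopG pmM); rewrite odd_card_component; case: #|_|.
rewrite inE => /andP[fM crf].
by rewrite -(bichromatic_uniq pmM fM eM (crosses_bichromatic crf) be).
Qed.

(* Inside a set respected by M, the M-edges leaving X are the bichromatic ones, i.e. only g. *)
Lemma odd_card_respects_setI M P g v : perfect_matching M -> respects M P ->
  g \in M -> bichromatic g -> incident g v -> odd #|P :&: X| = (v \in P).
Proof.
move=> pmM resp gM bg gv; rewrite (odd_card_crossing _ loopG pmM).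
rewrite -(respects_incident resp gM gv).
transitivity (odd #|[set e in [set g] | src e \in P]|); last by rewrite card_sep_set1 oddb.
congr (odd #|pred_of_set _|); apply/setP => e; rewrite !inE.
apply/andP/andP => [[eM]|[/eqP-> gP]].
  rewrite /crosses !inE -(resp e eM); case: (src e \in P) => //= crX.
  by rewrite (bichromatic_uniq pmM eM gM _ bg) // bichromatic_crosses.
by move: bg; rewrite bichromatic_crosses /crosses !inE -(resp g gM) gP.
Qed.

Section Cut.
Variable C : {set vtx G}.
Hypotheses (cutG : two_vertex_cut x x') (compC : component_minus x x' C).
Local Notation B := (bset x x' C).

Let xx' : x != x'. Proof. by apply: contraNneq x'X => <-. Qed.

Lemma notin_C_x : x \notin C.
Proof. by apply: contraL (component_minus_notin compC (u:=x)) _; rewrite !inE eqxx. Qed.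

Lemma notin_C_x' : x' \notin C.
Proof. by apply: contraL (component_minus_notin compC (u:=x')) _; rewrite !inE eqxx orbT. Qed.

Lemma mem_bset v : (v \in B) = [|| v == x, v == x' | v \in C].
Proof. by rewrite !inE. Qed.

Lemma sub_C_bset v : v \in C -> v \in B.
Proof. by rewrite mem_bset => ->; rewrite !orbT. Qed.

Lemma incident_C_bset e v : v \in C -> incident e v -> (src e \in B) && (tgt e \in B).
Proof.
have inB w : (w \in C) || (w \in [set x; x']) -> w \in B.
  by rewrite mem_bset !inE => /orP[->|/orP[]->]; rewrite ?orbT.
move=> vC /orP[]/eqP ev; rewrite -ev in vC.
  by rewrite sub_C_bset //=; apply/inB/(component_minus_adj compC vC (adj_src_tgt e)).
by rewrite andbC sub_C_bset //=; apply/inB/(component_minus_adj compC vC (adj_tgt_src e)).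
Qed.

Lemma matched_closure_setD M : perfect_matching M -> matched_closure M C :\ x :\ x' = C.
Proof.
move=> pmM; apply/setP => v; rewrite !in_setD1.
apply/idP/idP => [/and3P[vx' vx] | vC]; last first.
  rewrite (sub_matched_closure pmM vC) andbT.
  by apply/andP; split; apply: contraTneq vC => ->; rewrite ?notin_C_x ?notin_C_x'.
have [e eM ev] := deg1_exists (pmM v).
rewrite (mem_matched_closure C pmM eM ev) => eC.
have : (src e \in B) && (tgt e \in B).
  by case/orP: eC => /incident_C_bset; apply; rewrite ?incident_src ?incident_tgt.
by case/orP: ev => /eqP-> /andP[]; rewrite !mem_bset (negbTE vx) (negbTE vx') => //= _ ->.
Qed.

Lemma card_matched_closure M : perfect_matching M ->
  #|matched_closure M C| = (x \in matched_closure M C) + (x' \in matched_closure M C) + #|C|.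
Proof.
move=> pmM; rewrite (cardsD1 x) (cardsD1 x' (_ :\ x)) matched_closure_setD //.
by rewrite in_setD1 eq_sym xx' addnA.
Qed.

Lemma card_matched_closureI M : perfect_matching M ->
  #|matched_closure M C :&: X| = (x \in matched_closure M C) + #|C :&: X|.
Proof.
move=> pmM; rewrite (cardsD1 x) in_setI xX andbT; congr (_ + #|pred_of_set _|).
apply/setP => v; have /setP/(_ v) := matched_closure_setD pmM.
rewrite !in_setD1 !in_setI => <-.
by case: (v =P x') => [->|_ /=]; rewrite ?(negbTE x'X) ?andbF ?andbA.
Qed.

(* For M through a red edge at x, odd_card_respects_setI makes |C :&: X| even; for M through
   a red edge at x' it then puts x and x' both in or both out of matched_closure M C, whose
   cardinality is even. *)
Lemma even_card_C : ~~ odd #|C|.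
Proof.
have [g [xg redg]] := redG x; have [g' [x'g' redg']] := redG x'.
have [M [pmM gM]] := coverG g; have [M' [pmM' g'M']] := coverG g'.
have oddM := odd_card_respects_setI pmM (matched_closure_respects C pmM) gM
  (red_bichromatic redg) xg.
have oddM' := odd_card_respects_setI pmM' (matched_closure_respects C pmM') g'M'
  (red_bichromatic redg') x'g'.
have evenM' := even_card_respects loopG pmM' (matched_closure_respects C pmM').
rewrite card_matched_closureI // oddD oddb in oddM.
rewrite card_matched_closureI // oddD oddb in oddM'.
rewrite card_matched_closure // !oddD !oddb in evenM'.
move: oddM oddM' evenM'; case: (odd #|C :&: X|); case: (odd #|C|);
  case: (x \in matched_closure M C); case: (x \in matched_closure M' C);
  by case: (x' \in matched_closure M' C).
Qed.

Lemma respects_C_or_bset M : perfect_matching M -> respects M C \/ respects M B.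
Proof.
move=> pmM; have resp := matched_closure_respects C pmM.
have := even_card_respects loopG pmM resp.
rewrite card_matched_closure // !oddD !oddb (negbTE even_card_C) addbF.
have memP v : (v \in matched_closure M C) =
    [|| (v == x) && (x \in matched_closure M C), (v == x') && (x' \in matched_closure M C)
      | v \in C].
  have /setP/(_ v) := matched_closure_setD pmM; rewrite !in_setD1 => <-.
  case: (v =P x) => [->|_]; first by rewrite (negbTE xx') /= orbF; case: (_ \in _).
  by case: (v =P x') => [->|_] /=; rewrite ?orbF //; case: (_ \in _).
case xP : (x \in matched_closure M C); case x'P : (x' \in matched_closure M C) => // _.
  right; suff <- : matched_closure M C = B by [].
  by apply/setP => v; rewrite memP mem_bset xP x'P !andbT.
left; suff <- : matched_closure M C = C by [].
by apply/setP => v; rewrite memP xP x'P !andbF.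
Qed.

Definition mono_matchable_outside :=
  exists2 N, perfect_on N (~: B) & {in N, forall e, ~~ bichromatic e}.

Definition matchable_inside := (exists N, perfect_on N C) /\
  exists2 K, perfect_on K (~: C) & [exists e in K, bichromatic e].

Lemma matchable_inside_of M g : perfect_matching M -> respects M C ->
  g \in M -> bichromatic g -> src g \notin C -> matchable_inside.
Proof.
move=> pmM resp gM bg gC; split; first by exists (restrict M C); apply: perfect_on_restrict.
exists (restrict M (~: C)); first exact: perfect_on_restrict pmM (respectsC resp).
by apply/existsP; exists g; rewrite !inE gM gC bg.
Qed.

Lemma mono_matchable_outside_of M g : perfect_matching M -> respects M B ->
  g \in M -> bichromatic g -> src g \in B -> mono_matchable_outside.
Proof.
move=> pmM resp gM bg gB.
exists (restrict M (~: B)); first exact: perfect_on_restrict pmM (respectsC resp).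
move=> e; rewrite inE in_setC => /andP[eM eB]; apply/negP => be.
by rewrite (bichromatic_uniq pmM eM gM be bg) gB in eB.
Qed.

Lemma perfect_on_C_monochromatic N e : matchable_inside -> perfect_on N C ->
  e \in N -> ~~ bichromatic e.
Proof.
move=> [_ [K pK /existsP[f /andP[fK bf]]]] pN eN; apply/negP => be.
have pm := perfect_matching_setU pN pK.
have eNK : e \in N :|: K by rewrite inE eN.
have fNK : f \in N :|: K by rewrite inE fK orbT.
have /andP[eC _] := pN.1 e eN; have /andP[fC _] := pK.1 f fK.
by move: fC; rewrite -(bichromatic_uniq pm eNK fNK be bf) in_setC eC.
Qed.

Lemma perfect_on_bset_one_bichromatic N : mono_matchable_outside -> perfect_on N B ->
  #|[set e in N | bichromatic e]| = 1.
Proof.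
move=> [N' pN' monoN'] pN; rewrite -(oneG (perfect_matching_setU pN pN')).
congr #|pred_of_set _|; apply/setP => e; rewrite !inE.
case: (boolP (bichromatic e)) => be; rewrite ?andbF // !andbT.
by case: (boolP (e \in N')) => [/monoN'|]; rewrite ?be ?orbF.
Qed.

Lemma mono_or_matchable : mono_matchable_outside \/ matchable_inside.
Proof.
have [g [xg redg]] := redG x; have [M [pmM gM]] := coverG g.
have bg := red_bichromatic redg.
case: (respects_C_or_bset pmM) => resp.
  right; apply: (matchable_inside_of pmM resp gM bg).
  by rewrite (respects_incident resp gM xg) notin_C_x.
left; apply: (mono_matchable_outside_of pmM resp gM bg).
by rewrite (respects_incident resp gM xg) mem_bset eqxx.
Qed.

Lemma matchable_inside_mono_outside : matchable_inside -> mono_matchable_outside.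
Proof.
move=> inC; have [c cC] := component_minus_nonempty compC.
have [g [cg redg]] := redG c; have [M [pmM gM]] := coverG g.
have bg := red_bichromatic redg.
case: (respects_C_or_bset pmM) => resp.
  have gC : g \in restrict M C by rewrite inE gM (respects_incident resp gM cg) cC.
  by have := perfect_on_C_monochromatic inC (perfect_on_restrict pmM resp) gC; rewrite bg.
apply: (mono_matchable_outside_of pmM resp gM bg).
by rewrite (respects_incident resp gM cg) sub_C_bset.
Qed.

Lemma mono_outside_matchable_inside : mono_matchable_outside -> matchable_inside.
Proof.
move=> outB; have [d dC dS] := two_vertex_cut_outside compC cutG.
have dB : d \notin B by move: dS; rewrite mem_bset !inE (negbTE dC) orbF.
have [g [dg redg]] := redG d; have [M [pmM gM]] := coverG g.
have bg := red_bichromatic redg.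
case: (respects_C_or_bset pmM) => resp.
  by apply: (matchable_inside_of pmM resp gM bg); rewrite (respects_incident resp gM dg).
have /card_gt0P[f] : 0 < #|[set e in restrict M B | bichromatic e]|.
  by rewrite (perfect_on_bset_one_bichromatic outB (perfect_on_restrict pmM resp)).
rewrite inE => /andP[]; rewrite inE => /andP[fM fB] bf.
by rewrite (bichromatic_uniq pmM fM gM bf bg) (respects_incident resp gM dg) (negbTE dB) in fB.
Qed.

Lemma mono_matchable_outside_holds : mono_matchable_outside.
Proof. by case: mono_or_matchable => // /matchable_inside_mono_outside. Qed.

Lemma matchable_inside_holds : matchable_inside.
Proof. by case: mono_or_matchable => // /mono_outside_matchable_inside. Qed.

Section WBlock.
Variable r : bool.
Local Notation H := (wblock x x' C r).
Local Notation oldE := (oldE x x' C).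
Implicit Types (o : oldE) (L : {set edg H}) (h : edg H) (w : bV x x' C).

Lemma incident_old o w : incident (inl o : edg H) w = incident (val o) (val w).
Proof. by rewrite /incident -!val_eqE. Qed.

Lemma incident_new k w : incident (inr k : edg H) w = (val w \in [set x; x']).
Proof. by rewrite /incident -!val_eqE !inE ![_ == val w]eq_sym. Qed.

Lemma colour_old o w : colour (inl o : edg H) w = colour (val o) (val w).
Proof. by rewrite /colour -!val_eqE. Qed.

Lemma bichromatic_new k : bichromatic (inr k : edg H).
Proof. by case: k => -[[|[|n]] ?] ?; rewrite /bichromatic //=; case: r. Qed.

Definition old_part L := [set o | inl o \in L].
Definition lift N : {set edg H} := inl @: [set o | val o \in N].
Definition project L := val @: old_part L.
Definition spans_cut (h : edg H) := forall w, incident h w = (val w \in [set x; x']).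

Lemma mem_lift N o : (inl o \in lift N) = (val o \in N).
Proof. by rewrite mem_imset ?inE //; apply: inl_inj. Qed.

Lemma inr_notin_imset (A : {set oldE}) k : (inr k : edg H) \notin inl @: A.
Proof. by apply/imsetP => -[]. Qed.

Lemma sep_old_part L (p : pred (edg H)) : (forall k, inr k \in L -> ~~ p (inr k)) ->
  [set g in L | p g] = [set g in inl @: old_part L | p g].
Proof.
move=> noNew; apply/setP => -[o|k]; rewrite !inE.
  by rewrite mem_imset ?inE //; apply: inl_inj.
rewrite (negbTE (inr_notin_imset _ _)) /=.
by case: (boolP (inr k \in L)) => // /noNew/negbTE.
Qed.

Lemma deg_project L w : (forall k, inr k \in L -> ~~ incident (inr k : edg H) w) ->
  deg (project L) (val w) = deg L w.
Proof.
move=> noNew; rewrite /deg sep_old_part // (card_sep_imset _ _ val_inj).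
rewrite (card_sep_imset _ _ (@inl_inj _ _)).
by congr #|pred_of_set _|; apply/setP => o; rewrite !inE incident_old.
Qed.

Lemma project_lift N : inside N B -> project (lift N) = N.
Proof.
move=> inN; apply/setP => e; apply/imsetP/idP => [[o /[!inE] /[!mem_lift] oN ->] // | eN].
by exists (Sub e (inN e eN)); rewrite ?inE ?mem_lift SubK.
Qed.

Lemma deg_lift N w : inside N B -> deg (lift N) w = deg N (val w).
Proof.
move=> inN; rewrite -{2}(project_lift inN) deg_project // => k.
by rewrite (negbTE (inr_notin_imset _ _)).
Qed.

Lemma perfect_matching_lift_bset N : perfect_on N B -> perfect_matching (lift N).
Proof. by move=> [inN degN] w; rewrite -/(deg _ w) deg_lift // degN // (valP w). Qed.

Lemma perfect_matching_lift_C N h : perfect_on N C -> spans_cut h ->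
  perfect_matching (lift N :|: [set h]).
Proof.
move=> [inN degN] hw w; rewrite -/(deg _ w).
have inNB : inside N B by move=> e /inN /andP[sC tC]; rewrite !sub_C_bset.
case: (boolP (val w \in C)) => wC.
  rewrite deg_setU_out => [|g /set1P->]; first by rewrite deg_lift ?degN.
  by rewrite hw (component_minus_notin compC wC).
rewrite setUC deg_setU_out => [|g].
  by rewrite deg_set1 hw; move: (valP w); rewrite mem_bset (negbTE wC) orbF !inE => ->.
move=> /imsetP[o /[!inE] oN ->]; rewrite incident_old.
by apply: contra wC => /(inside_incident inN oN).
Qed.

Lemma project_inside L : inside (project L) B.
Proof. by move=> e /imsetP[o _ ->]; apply: (valP o). Qed.

Lemma perfect_on_project_bset L : perfect_matching L -> (forall k, inr k \notin L) ->
  perfect_on (project L) B.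
Proof.
move=> pmL noNew; split=> [|u uB]; first exact: project_inside.
rewrite -[u]/(val (Sub u uB : bV x x' C)) deg_project => [|k]; first exact: pmL.
by rewrite (negbTE (noNew k)).
Qed.

Lemma perfect_on_project_C L k : perfect_matching L -> inr k \in L ->
  perfect_on (project L) C.
Proof.
move=> pmL kL; split=> [e /imsetP[o /[!inE] oL ->] | u uC].
  have endC u : u \in B -> incident (val o) u -> u \in C.
    move=> uB ou; apply/negPn/negP => uC.
    have uS : u \in [set x; x'] by move: uB; rewrite mem_bset (negbTE uC) orbF !inE.
    have := deg1_uniq (pmL (Sub u uB)) oL kL.
    by rewrite incident_old incident_new SubK => /(_ ou uS).
  have /andP[sB tB] := valP o.
  by rewrite !endC ?incident_src ?incident_tgt.
rewrite -[u]/(val (Sub u (sub_C_bset uC) : bV x x' C)) deg_project => [|k' _].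
  exact: pmL.
by rewrite incident_new (component_minus_notin compC uC).
Qed.

Lemma one_bichromatic_wblock L : perfect_matching L -> #|[set g in L | bichromatic g]| = 1.
Proof.
(* With a new edge, the old edges of L match G[C]; without one, they match G[B]. *)
move=> pmL; case: (pickP (fun k => inr k \in L)) => [k kL | noNew].
  rewrite -(cards1 (inr k : edg H)); congr #|pred_of_set _|.
  apply/setP => -[o|k']; rewrite !inE.
    case: (boolP (inl o \in L)) => //= oL; apply/negbTE.
    apply: (perfect_on_C_monochromatic matchable_inside_holds (perfect_on_project_C pmL kL)).
    by apply/imsetP; exists o; rewrite ?inE.
  rewrite bichromatic_new andbT; apply/idP/eqP => [k'L|->//].
  by apply: (deg1_uniq (pmL (bx x x' C))); rewrite // incident_new !inE eqxx.
rewrite sep_old_part => [|k]; last by rewrite noNew.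
rewrite (card_sep_imset _ _ (@inl_inj _ _)).
have pB : perfect_on (project L) B by apply: perfect_on_project_bset => // k; rewrite noNew.
by rewrite -(perfect_on_bset_one_bichromatic mono_matchable_outside_holds pB)
  (card_sep_imset _ _ val_inj).
Qed.

Lemma exists_spans_cut : exists h, spans_cut h.
Proof.
have newP k : add_new x x' C k -> exists h, spans_cut h.
  by move=> kP; exists (inr (exist _ k kP)) => w; rewrite incident_new.
case: (boolP (red_at_x x x' C)) => rx; last exact: (newP (Ordinal (isT : 0 < 3))).
case: (boolP (red_at_x' x x' C)) => rx'; last exact: (newP (Ordinal (isT : 1 < 3))).
case: (boolP (bich_xx' x x' C)) => [/existsP[o /andP[_ oxx']] | bxx'].
  by exists (inl o) => w; rewrite incident_old (incident_joins _ oxx').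
by apply: (newP (Ordinal (isT : 2 < 3))); rewrite /add_new /= rx rx' bxx'.
Qed.

Lemma matching_covered_wblock : matching_covered H.
Proof.
case=> [o|k]; last first.
  have [[N pN] _] := matchable_inside_holds.
  exists (lift N :|: [set inr k]); split; last by rewrite in_setU set11 orbT.
  by apply: perfect_matching_lift_C pN _ => w; rewrite incident_new.
have [M [pmM oM]] := coverG (val o).
have /andP[sB tB] := valP o.
case: (respects_C_or_bset pmM) => resp; last first.
  exists (lift (restrict M B)); rewrite mem_lift in_set oM sB.
  by split=> //; apply/perfect_matching_lift_bset/perfect_on_restrict.
have pC := perfect_on_restrict pmM resp.
case: (boolP (src (val o) \in C)) => sC.
  have [h hw] := exists_spans_cut.
  exists (lift (restrict M C) :|: [set h]); split; first exact: perfect_matching_lift_C pC hw.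
  by rewrite in_setU mem_lift in_set oM sC.
have tC : tgt (val o) \notin C by rewrite -(resp _ oM).
exists (lift (restrict M C) :|: [set inl o]); split; last by rewrite in_setU set11 orbT.
apply: perfect_matching_lift_C pC _ => w; rewrite incident_old; apply: incident_joins.
by apply: joins_of_ends (loopG (val o)); [move: sB | move: tB];
  rewrite mem_bset !inE ?(negbTE sC) ?(negbTE tC) orbF.
Qed.

Lemma red_wblock w : exists g : edg H, incident g w /\ colour g w = true.
Proof.
case: (boolP (val w \in C)) => wC.
  have [e [ew rede]] := redG (val w).
  by exists (inl (Sub e (incident_C_bset wC ew) : oldE)); rewrite incident_old colour_old SubK.
have := valP w; rewrite mem_bset (negbTE wC) orbF => /orP[]/eqP wx.
  case: (boolP (red_at_x x x' C)) => [/existsP[o /andP[ox rox]] | rx].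
    by exists (inl o); rewrite incident_old colour_old wx.
  exists (inr (exist _ (Ordinal (isT : 0 < 3)) rx)).
  by rewrite incident_new wx !inE eqxx /colour -val_eqE /= wx eqxx.
case: (boolP (red_at_x' x x' C)) => [/existsP[o /andP[ox rox]] | rx'].
  by exists (inl o); rewrite incident_old colour_old wx.
exists (inr (exist _ (Ordinal (isT : 1 < 3)) rx')).
by rewrite incident_new wx !inE eqxx orbT /colour -val_eqE /= wx (negbTE xx').
Qed.

Lemma Wstate_wblock : Wstate H.
Proof.
split.
- by case=> [o|k]; rewrite /= -val_eqE /=; [exact: loopG | exact: xx'].
- by case=> [o|k]; [exact: monoG (val o) | rewrite bichromatic_new].
- exact: matching_covered_wblock.
- exact: one_bichromatic_wblock.
- exact: red_wblock.
Qed.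

End WBlock.
End Cut.
End WState.

Theorem mainTheorem14 (G : mgraph) (X X' : {set vtx G}) (x x' : vtx G) :
  Wstate G ->
  is_component (mrel G) X -> is_component (mrel G) X' -> X != X' ->
  X :|: X' = [set: vtx G] ->
  x \in X -> x' \in X' ->
  two_vertex_cut x x' ->
  forall (C : {set vtx G}), component_minus x x' C ->
  forall redx2 : bool, Wstate (wblock x x' C redx2).
Proof.
move=> WG compX compX' neqX _ xX x'X' cutG C compC r.
have x'X := is_component_disjoint (@mrel_sym G) compX compX' neqX x'X'.
exact (Wstate_wblock WG compX xX x'X cutG compC r).
Qed.
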